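(* There exists $\mathcal{G}\subseteq C(\mathbb{R},\mathbb{R})$ such that $\mathcal{K}_\mathcal{G}$ contains every nonempty hereditary family $\mathcal{E}\subseteq\mathrm{CL}(\mathbb{R})$.
   Context: $\mathrm{CL}(\mathbb{R})$ denotes the family of all closed subsets of $\mathbb{R}$ and $C(\mathbb{R},\mathbb{R})$ the set of all continuous functions $\mathbb{R}\to\mathbb{R}$. For $\mathcal{G}\subseteq C(\mathbb{R},\mathbb{R})$ let $R_\mathcal{G}=\{(f,E)\in C(\mathbb{R},\mathbb{R})\times\mathrm{CL}(\mathbb{R}):(\exists g\in\mathcal{G})\, f\restriction E=g\restriction E\}$. For $\mathcal{F}\subseteq C(\mathbb{R},\mathbb{R})$ put $E_\mathcal{G}(\mathcal{F})=\{E\in\mathrm{CL}(\mathbb{R}):(\forall f\in\mathcal{F})\,(f,E)\in R_\mathcal{G}\}$, and let $\mathcal{K}_\mathcal{G}=\{E_\mathcal{G}(\mathcal{F}):\mathcal{F}\subseteq C(\mathbb{R},\mathbb{R})\}$. A family $\mathcal{E}\subseteq\mathrm{CL}(\mathbb{R})$ is hereditary if for all $D,E\in\mathrm{CL}(\mathbb{R})$, $D\subseteq E\in\mathcal{E}$ implies $D\in\mathcal{E}$. *)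

From Stdlib Require Export Reals.
Open Scope R_scope.

Definition CRR (f : R -> R) : Prop := continuity f.

Definition CL (E : R -> Prop) : Prop := closed_set E.

Definition RG (G : (R -> R) -> Prop) (f : R -> R) (E : R -> Prop) : Prop :=
  CRR f /\ CL E /\ exists g, G g /\ forall x, E x -> f x = g x.

Definition EG (G F : (R -> R) -> Prop) (E : R -> Prop) : Prop :=
  CL E /\ forall f, F f -> RG G f E.

Definition in_KG (G : (R -> R) -> Prop) (fam : (R -> Prop) -> Prop) : Prop :=
  exists F : (R -> R) -> Prop,
    (forall f, F f -> CRR f) /\ (forall E, fam E <-> EG G F E).

Definition hereditary (fam : (R -> Prop) -> Prop) : Prop :=
  forall D E, CL D -> CL E -> (forall x, D x -> E x) -> fam E -> fam D.

(* Every nonempty closed set E gets a continuous code f_E: min(|x-p|, 1) if E = {p}; a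
   function equal to 2 exactly at p and q if E = {p, q}; the constant lam E if E has at
   least three points, where lam is injective on closed sets (4 plus the ternary number
   whose digits record which rational balls E meets).  G consists of the continuous g
   that vanish nowhere, take the value 2 at most once, and are not identically lam E' on
   any closed three-point set E'.  No g in G agrees with f_E on E, whereas if p lies in
   E but not in the closed set D, modifying f_E near p gives a g in G agreeing with f_E
   on D.  Hence for hereditary fam and F = {f_E : E closed, E not in fam}: a member of
   fam cannot contain such an E, so it lies in E_G(F); a closed E outside fam is
   excluded from E_G(F) by f_E itself, or, when E is empty, by heredity. *)

From Stdlib Require Import Reals Lra Classical ClassicalEpsilon FunctionalExtensionality Cantor.
From Coquelicot Require Import Coquelicot.
Open Scope R_scope.

Ltac piecewise_lra :=
  unfold Rmin, Rmax in *;
  repeat match goal with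
  | H : context [Rle_dec ?a ?b] |- _ => destruct (Rle_dec a b)
  | |- context [Rle_dec ?a ?b] => destruct (Rle_dec a b)
  end;
  try split_Rabs; lra.

Definition ternary_digit (b : nat -> bool) (k : nat) : R :=
  (if b k then 1 else 0) * (/ 3) ^ k.

Definition ternary (b : nat -> bool) : R := Series (ternary_digit b).

Lemma ternary_digit_bounds b k : 0 <= ternary_digit b k <= (/ 3) ^ k.
Proof.
  unfold ternary_digit; pose proof (pow_lt (/ 3) k ltac:(lra)).
  destruct (b k); lra.
Qed.

Lemma ex_series_ternary b : ex_series (ternary_digit b).
Proof.
  apply (@ex_series_le R_AbsRing R_CompleteNormedModule _ (fun k => (/ 3) ^ k)).
  - intro k; change (norm _) with (Rabs (ternary_digit b k)).
    pose proof (ternary_digit_bounds b k); rewrite Rabs_right; lra.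
  - apply ex_series_geom; rewrite Rabs_right; lra.
Qed.

Lemma ternary_cons b :
  ternary b = (if b 0%nat then 1 else 0) + / 3 * ternary (fun k => b (S k)).
Proof.
  unfold ternary; rewrite Series_incr_1 by apply ex_series_ternary.
  rewrite <- Series_scal_l; unfold ternary_digit at 1; simpl; rewrite Rmult_1_r.
  f_equal; apply Series_ext; intro k; unfold ternary_digit; simpl; ring.
Qed.

Lemma ternary_bounds b : 0 <= ternary b <= 3 / 2.
Proof.
  split.
  - replace 0 with (Series (fun k => 0 * ternary_digit b k))
      by (rewrite Series_scal_l; ring).
    apply Series_le; [|apply ex_series_ternary].
    intro k; pose proof (ternary_digit_bounds b k); lra.
  - replace (3 / 2) with (Series (fun k => (/ 3) ^ k))
      by (rewrite Series_geom; [field | rewrite Rabs_right; lra]).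
    apply Series_le; [apply ternary_digit_bounds|].
    apply ex_series_geom; rewrite Rabs_right; lra.
Qed.

Lemma ternary_inj b b' : ternary b = ternary b' -> forall n, b n = b' n.
Proof.
  intros Heq n; revert b b' Heq; induction n as [|n IH]; intros b b' Heq;
    rewrite (ternary_cons b), (ternary_cons b') in Heq;
    pose proof (ternary_bounds (fun k => b (S k)));
    pose proof (ternary_bounds (fun k => b' (S k))).
  - destruct (b 0%nat), (b' 0%nat); auto; lra.
  - apply (IH (fun k => b (S k)) (fun k => b' (S k))).
    destruct (b 0%nat), (b' 0%nat); lra.
Qed.

Definition rball (a m : nat) (x : R) : Prop :=
  Rabs (x - (INR a / INR (S m) - INR m)) < / INR (S m).

Lemma rball_small x eps :
  0 < eps -> exists a m, rball a m x /\ forall y, rball a m y -> Rabs (y - x) < eps.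
Proof.
  intro eps_pos.
  assert (Hd : 0 < 2 / eps) by (apply Rdiv_lt_0_compat; lra).
  pose proof (Rabs_pos x).
  assert (Hv : 0 <= Rabs x + 2 / eps) by lra.
  destruct (nfloor_ex _ Hv) as [n Hn]; pose proof (pos_INR n).
  set (m := S n); set (M := INR (S m)).
  assert (HM : M = INR n + 2) by (unfold M, m; rewrite !S_INR; ring).
  assert (Ht : 0 <= (x + INR m) * M).
  { apply Rmult_le_pos; [|lra]. unfold m; rewrite S_INR.
    try split_Rabs; lra. }
  destruct (nfloor_ex _ Ht) as [a Ha].
  assert (Hinv : / M < eps / 2).
  { replace (eps / 2) with (/ (2 / eps)) by (field; lra).
    apply Rinv_lt_contravar; [apply Rmult_lt_0_compat|]; lra. }
  exists a, m; unfold rball; fold M.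
  assert (Hx : Rabs (x - (INR a / M - INR m)) < / M).
  { replace (x - (INR a / M - INR m)) with (((x + INR m) * M - INR a) * / M)
      by (field; lra).
    rewrite Rabs_right.
    - rewrite <- (Rmult_1_l (/ M)) at 2; apply Rmult_lt_compat_r; [apply Rinv_0_lt_compat|]; lra.
    - apply Rle_ge, Rmult_le_pos; [lra | apply Rlt_le, Rinv_0_lt_compat; lra]. }
  split; [exact Hx|].
  intros y Hy; split_Rabs; lra.
Qed.

Definition meets (E : R -> Prop) (am : nat * nat) : bool :=
  if excluded_middle_informative (exists x, E x /\ rball (fst am) (snd am) x)
  then true else false.

Definition lam (E : R -> Prop) : R := 4 + ternary (fun n => meets E (Cantor.of_nat n)).

Lemma lam_ge4 E : 4 <= lam E.
Proof. unfold lam; pose proof (ternary_bounds (fun n => meets E (Cantor.of_nat n))); lra. Qed.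

Lemma closed_far D x : CL D -> ~ D x -> exists r, 0 < r /\ forall y, D y -> r <= Rabs (y - x).
Proof.
  intros HD nDx; destruct (HD x nDx) as [r Hr]; exists r; split; [apply cond_pos|].
  intros y Dy; apply Rnot_lt_le; intro Hy; exact (Hr y Hy Dy).
Qed.

Lemma lam_eq_incl E E' : lam E = lam E' -> CL E' -> forall x, E x -> E' x.
Proof.
  intros Hlam HE' x Ex; apply NNPP; intro nE'x.
  destruct (closed_far E' x HE' nE'x) as [r [r_pos Hr]].
  destruct (rball_small x r r_pos) as [a [m [Hx Hsmall]]].
  assert (Hmeets : meets E (a, m) = meets E' (a, m)).
  { rewrite <- (Cantor.cancel_of_to (a, m)).
    apply (ternary_inj (fun n => meets E (Cantor.of_nat n)) (fun n => meets E' (Cantor.of_nat n))).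
    unfold lam in Hlam; lra. }
  revert Hmeets; unfold meets; simpl.
  destruct excluded_middle_informative as [_|nE]; [|exfalso; eauto].
  destruct excluded_middle_informative as [[y [E'y Hy]]|]; [|discriminate].
  pose proof (Hr y E'y); pose proof (Hsmall y Hy); lra.
Qed.

Lemma continuity_dist p : continuity (fun x => Rabs (x - p)).
Proof.
  apply (continuity_comp _ Rabs); [|exact Rcontinuity_abs].
  apply continuity_minus; [apply derivable_continuous, derivable_id | apply continuity_const].
  now intros.
Qed.

Lemma continuity_Rmin f g :
  continuity f -> continuity g -> continuity (fun x => Rmin (f x) (g x)).
Proof.
  intros Hf Hg.
  replace (fun x => Rmin (f x) (g x)) with (fun x => / 2 * (f x + g x - Rabs (f x - g x)))
    by (apply functional_extensionality; intro x; piecewise_lra).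
  apply continuity_scal, continuity_minus; [now apply continuity_plus|].
  apply (continuity_comp _ Rabs); [now apply continuity_minus | exact Rcontinuity_abs].
Qed.

Lemma continuity_Rmax f g :
  continuity f -> continuity g -> continuity (fun x => Rmax (f x) (g x)).
Proof.
  intros Hf Hg.
  replace (fun x => Rmax (f x) (g x)) with (fun x => / 2 * (f x + g x + Rabs (f x - g x)))
    by (apply functional_extensionality; intro x; piecewise_lra).
  apply continuity_scal, continuity_plus; [now apply continuity_plus|].
  apply (continuity_comp _ Rabs); [now apply continuity_minus | exact Rcontinuity_abs].
Qed.

Definition three_points (E : R -> Prop) : Prop :=
  exists a b c, E a /\ E b /\ E c /\ a <> b /\ a <> c /\ b <> c.

Record admissible (g : R -> R) : Prop := {
  admissible_continuity : continuity g;
  admissible_neq0 : forall x, g x <> 0;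
  admissible_eq2_uniq : forall p q, g p = 2 -> g q = 2 -> p = q;
  admissible_not_lam : forall E, CL E -> three_points E -> ~ (forall x, E x -> g x = lam E)
}.

Definition fsing (p : R) (x : R) : R := Rmin (Rabs (x - p)) 1.

Definition fpair (p q : R) (x : R) : R := 2 + Rmin (Rmin (Rabs (x - p)) (Rabs (x - q))) 1.

Inductive code (E : R -> Prop) : (R -> R) -> Prop :=
  | code_sing p : (forall x, E x <-> x = p) -> code E (fsing p)
  | code_pair p q : p <> q -> (forall x, E x <-> x = p \/ x = q) -> code E (fpair p q)
  | code_large : three_points E -> code E (fun _ => lam E).

Lemma code_exists E : (exists x, E x) -> exists f, code E f.
Proof.
  intros [p Ep].
  destruct (classic (three_points E)) as [HE|not3]; [eexists; now apply code_large|].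
  destruct (classic (exists q, E q /\ q <> p)) as [[q [Eq qp]]|only_p].
  - exists (fpair p q); apply code_pair; [congruence|].
    intro x; split; [|intros [-> | ->]; assumption].
    intro Ex; apply NNPP; intro Hx; apply not3.
    exists p, q, x; repeat split; auto; intro; subst; tauto.
  - exists (fsing p); apply code_sing.
    intro x; split; [|intros ->; assumption].
    intro Ex; apply NNPP; intro xp; apply only_p; eauto.
Qed.

Lemma code_continuity E f : code E f -> continuity f.
Proof.
  intros []; intros.
  - apply continuity_Rmin; [apply continuity_dist | apply continuity_const; now intros].
  - apply continuity_plus; [apply continuity_const; now intros|].
    apply continuity_Rmin; [|apply continuity_const; now intros].
    apply continuity_Rmin; apply continuity_dist.
  - apply continuity_const; now intros.
Qed.

Lemma code_not_admissible E f g :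
  CL E -> code E f -> admissible g -> ~ (forall x, E x -> f x = g x).
Proof.
  intros HE [p Hp | p q pq Hpq | H3] [_ g_neq0 g_eq2 g_not_lam] Hfg.
  - apply (g_neq0 p); rewrite <- Hfg by now apply Hp.
    unfold fsing; rewrite Rminus_diag, Rabs_R0; piecewise_lra.
  - apply pq, g_eq2; [rewrite <- Hfg by (apply Hpq; auto) ..];
      unfold fpair; rewrite Rminus_diag, Rabs_R0; piecewise_lra.
  - apply (g_not_lam E HE H3); intros x Ex; rewrite <- Hfg; auto.
Qed.

Lemma equidistant_three_points a b c p :
  Rabs (a - p) = Rabs (b - p) -> Rabs (a - p) = Rabs (c - p) -> a = b \/ a = c \/ b = c.
Proof.
  intros Hab Hac; revert Hab Hac; split_Rabs; intros.
  all: first [left; lra | right; left; lra | right; right; lra | lra].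
Qed.

Section Extension.

Variables (D : R -> Prop) (p r : R).
Hypothesis r_pos : 0 < r.
Hypothesis D_far : forall x, D x -> r <= Rabs (x - p).

Lemma fsing_extends : exists g, admissible g /\ forall x, D x -> fsing p x = g x.
Proof.
  exists (fun x => Rmin (Rmax (Rabs (x - p)) r) 1); split.
  - split.
    + apply continuity_Rmin; [|apply continuity_const; now intros].
      apply continuity_Rmax; [apply continuity_dist | apply continuity_const; now intros].
    + intro x; piecewise_lra.
    + intros a b Ha; exfalso; revert Ha; piecewise_lra.
    + intros E _ [a [_ [_ [Ea _]]]] Hg.
      pose proof (Hg a Ea); pose proof (lam_ge4 E); piecewise_lra.
  - intros x Dx; pose proof (D_far x Dx); unfold fsing; piecewise_lra.
Qed.

Lemma fpair_extends q : exists g, admissible g /\ forall x, D x -> fpair p q x = g x.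
Proof.
  exists (fun x => 2 + Rmin (Rmin (Rmax (Rabs (x - p)) r) (Rabs (x - q))) 1); split.
  - split.
    + apply continuity_plus; [apply continuity_const; now intros|].
      apply continuity_Rmin; [|apply continuity_const; now intros].
      apply continuity_Rmin; [|apply continuity_dist].
      apply continuity_Rmax; [apply continuity_dist | apply continuity_const; now intros].
    + intro x; piecewise_lra.
    + intros a b Ha Hb.
      assert (a = q) by (revert Ha; piecewise_lra).
      assert (b = q) by (revert Hb; piecewise_lra).
      congruence.
    + intros E _ [a [_ [_ [Ea _]]]] Hg.
      pose proof (Hg a Ea); pose proof (lam_ge4 E); piecewise_lra.
  - intros x Dx; pose proof (D_far x Dx); unfold fpair; piecewise_lra.
Qed.

(* The tent over p takes each value at most twice, so agreeing with a constant lam E' on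
   a three-point set E' forces E' to reach D, whence lam E' = lam E. *)
Lemma lam_extends E : E p -> exists g, admissible g /\ forall x, D x -> lam E = g x.
Proof.
  intro Ep; pose proof (lam_ge4 E).
  exists (fun x => lam E + Rmax 0 (r - Rabs (x - p))); split.
  - split.
    + apply continuity_plus; [apply continuity_const; now intros|].
      apply continuity_Rmax; [apply continuity_const; now intros|].
      apply continuity_minus; [apply continuity_const; now intros | apply continuity_dist].
    + intro x; piecewise_lra.
    + intros a b Ha; exfalso; revert Ha; piecewise_lra.
    + intros E' HE' [a [b [c [Ea [Eb [Ec [ab [ac bc]]]]]]]] Hg.
      destruct (classic (exists y, E' y /\ r <= Rabs (y - p))) as [[y [E'y Hy]]|near].
      * assert (Hlam : lam E = lam E') by (pose proof (Hg y E'y); piecewise_lra).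
        pose proof (Hg p (lam_eq_incl E E' Hlam HE' p Ep)).
        rewrite Rminus_diag, Rabs_R0 in *; piecewise_lra.
      * assert (Hnear : forall y, E' y -> Rabs (y - p) < r)
          by (intros y E'y; apply Rnot_le_lt; eauto).
        pose proof (Hnear a Ea); pose proof (Hnear b Eb); pose proof (Hnear c Ec).
        pose proof (Hg a Ea); pose proof (Hg b Eb); pose proof (Hg c Ec).
        destruct (equidistant_three_points a b c p) as [|[|]]; try tauto; piecewise_lra.
  - intros x Dx; pose proof (D_far x Dx); piecewise_lra.
Qed.

End Extension.

Lemma fpair_comm p q : fpair p q = fpair q p.
Proof. apply functional_extensionality; intro x; unfold fpair; now rewrite (Rmin_comm (Rabs _)). Qed.

Lemma code_extends E f D p :
  CL D -> code E f -> E p -> ~ D p -> exists g, admissible g /\ forall x, D x -> f x = g x.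
Proof.
  intros HD cd Ep nDp; destruct (closed_far D p HD nDp) as [r [r_pos D_far]].
  destruct cd as [p' Hp' | p' q pq Hpq | _].
  - apply Hp' in Ep; subst p'; exact (fsing_extends D p r r_pos D_far).
  - apply Hpq in Ep; destruct Ep; subst; [|rewrite fpair_comm];
      exact (fpair_extends D _ r r_pos D_far _).
  - exact (lam_extends D p r r_pos D_far E Ep).
Qed.

Definition rejected_codes (fam : (R -> Prop) -> Prop) (f : R -> R) : Prop :=
  exists E, CL E /\ ~ fam E /\ code E f.

Section Family.

Variable fam : (R -> Prop) -> Prop.
Hypothesis fam_closed : forall E, fam E -> CL E.
Hypothesis fam_hereditary : hereditary fam.

Lemma fam_incl_EG E : fam E -> EG admissible (rejected_codes fam) E.
Proof.
  intro famE; split; [now apply fam_closed|].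
  intros f [E' [HE' [nfamE' cd]]].
  split; [exact (code_continuity E' f cd)|]; split; [now apply fam_closed|].
  destruct (classic (exists p, E' p /\ ~ E p)) as [[p [E'p nEp]]|incl].
  - exact (code_extends E' f E p (fam_closed E famE) cd E'p nEp).
  - exfalso; apply nfamE', (fam_hereditary E' E HE' (fam_closed E famE)); [|exact famE].
    intros x E'x; apply NNPP; eauto.
Qed.

Hypothesis fam_nonempty : exists E, fam E.

Lemma EG_incl_fam E : EG admissible (rejected_codes fam) E -> fam E.
Proof.
  intros [HE HEG]; apply NNPP; intro nfamE.
  destruct (classic (exists x, E x)) as [ne|empty].
  - destruct (code_exists E ne) as [f cd].
    destruct (HEG f (ex_intro _ E (conj HE (conj nfamE cd)))) as [_ [_ [g [Gg Hg]]]].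
    exact (code_not_admissible E f g HE cd Gg Hg).
  - destruct fam_nonempty as [E0 famE0]; apply nfamE.
    apply (fam_hereditary E E0 HE (fam_closed E0 famE0)); [|exact famE0].
    intros x Ex; exfalso; eauto.
Qed.

End Family.

Theorem theorem2p6 :
  exists G : (R -> R) -> Prop,
    (forall g, G g -> CRR g) /\
    forall fam : (R -> Prop) -> Prop,
      (forall E, fam E -> CL E) ->
      (exists E, fam E) ->
      hereditary fam ->
      in_KG G fam.
Proof.
  exists admissible; split; [exact admissible_continuity|].
  intros fam fam_closed fam_nonempty fam_hereditary.
  exists (rejected_codes fam); split.
  - intros f [E [_ [_ cd]]]; exact (code_continuity E f cd).
  - intro E; split.
    + exact (fam_incl_EG fam fam_closed fam_hereditary E).
    + exact (EG_incl_fam fam fam_closed fam_hereditary fam_nonempty E).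
Qed.
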